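(* Let $\Psi$ be a well-formed declarative context and suppose $\Psi\vdash e\Leftarrow A$. Then: (i) if $\Psi\vdash[(e:A)/x]e'\Leftarrow C$ then $\Psi,x:A\vdash e'\Leftarrow C$; (ii) if $\Psi\vdash[(e:A)/x]e'\Rightarrow C$ then $\Psi,x:A\vdash e'\Rightarrow C$; (iii) if $\Psi\vdash[(e:A)/x]e'\bullet B\Rightarrow\!\!\Rightarrow C$ then $\Psi,x:A\vdash e'\bullet B\Rightarrow\!\!\Rightarrow C$.
   Context: Types $A,B,C ::= 1\mid\alpha\mid\forall\alpha.A\mid A\to B$; monotypes $\sigma,\tau ::= 1\mid\alpha\mid\sigma\to\tau$; declarative contexts $\Psi ::= \cdot\mid\Psi,\alpha\mid\Psi,x:A$ (variables distinct; $x$ is not declared in $\Psi$). Well-formedness $\Psi\vdash A$: all free type variables of $A$ are declared in $\Psi$. Declarative subtyping $\Psi\vdash A\le B$: least relation with $\alpha\in\Psi\Rightarrow\Psi\vdash\alpha\le\alpha$; $\Psi\vdash1\le1$; ($\Psi\vdash B_1\le A_1$, $\Psi\vdash A_2\le B_2$) $\Rightarrow\Psi\vdash A_1\to A_2\le B_1\to B_2$; ($\Psi\vdash\tau$ monotype, $\Psi\vdash[\tau/\alpha]A\le B$) $\Rightarrow\Psi\vdash\forall\alpha.A\le B$; $\Psi,\beta\vdash A\le B\Rightarrow\Psi\vdash A\le\forall\beta.B$. Terms $e ::= x\mid()\mid\lambda x.e\mid e_1\,e_2\mid(e:A)$; $[e_0/x]e'$ is capture-avoiding term substitution. Declarative bidirectional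 judgments are defined mutually by: $(x:A)\in\Psi\Rightarrow\Psi\vdash x\Rightarrow A$; ($\Psi\vdash e\Rightarrow A$, $\Psi\vdash A\le B$) $\Rightarrow\Psi\vdash e\Leftarrow B$; ($\Psi\vdash A$, $\Psi\vdash e\Leftarrow A$) $\Rightarrow\Psi\vdash(e:A)\Rightarrow A$; $\Psi\vdash()\Leftarrow1$; $\Psi\vdash()\Rightarrow1$; $\Psi,\alpha\vdash e\Leftarrow A\Rightarrow\Psi\vdash e\Leftarrow\forall\alpha.A$; ($\Psi\vdash\tau$ monotype, $\Psi\vdash e\bullet[\tau/\alpha]A\Rightarrow\!\!\Rightarrow C$) $\Rightarrow\Psi\vdash e\bullet\forall\alpha.A\Rightarrow\!\!\Rightarrow C$; $\Psi,x:A\vdash e\Leftarrow B\Rightarrow\Psi\vdash\lambda x.e\Leftarrow A\to B$; ($\Psi\vdash\sigma\to\tau$ monotypes, $\Psi,x:\sigma\vdash e\Leftarrow\tau$) $\Rightarrow\Psi\vdash\lambda x.e\Rightarrow\sigma\to\tau$; ($\Psi\vdash e_1\Rightarrow A$, $\Psi\vdash e_2\bullet A\Rightarrow\!\!\Rightarrow C$) $\Rightarrow\Psi\vdash e_1\,e_2\Rightarrow C$; $\Psi\vdash e\Leftarrow A\Rightarrow\Psi\vdash e\bullet A\to C\Rightarrow\!\!\Rightarrow C$. *)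

(* Locally nameless representation (Aydemir et al.):
   bound variables are de Bruijn indices, free variables are names (nat);
   binders are entered with cofinite quantification. *)
From Stdlib Require Import List.
Import ListNotations.

Definition var := nat.

Inductive typ : Type :=
  | TUnit : typ
  | TBVar : nat -> typ
  | TFVar : var -> typ
  | TAll  : typ -> typ          (* forall alpha. A  (body uses TBVar 0) *)
  | TArr  : typ -> typ -> typ.

Fixpoint open_typ_rec (k : nat) (U : typ) (A : typ) : typ :=
  match A with
  | TUnit => TUnit
  | TBVar n => if Nat.eqb k n then U else TBVar n
  | TFVar a => TFVar a
  | TAll B => TAll (open_typ_rec (S k) U B)
  | TArr B1 B2 => TArr (open_typ_rec k U B1) (open_typ_rec k U B2)
  end.

Definition open_typ (A U : typ) : typ := open_typ_rec 0 U A.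

Inductive mono : typ -> Prop :=
  | mono_unit : mono TUnit
  | mono_var : forall a, mono (TFVar a)
  | mono_arr : forall s t, mono s -> mono t -> mono (TArr s t).

Inductive trm : Type :=
  | EBVar : nat -> trm
  | EFVar : var -> trm
  | EUnit : trm
  | ELam  : trm -> trm
  | EApp  : trm -> trm -> trm
  | EAnno : trm -> typ -> trm.

Fixpoint open_trm_rec (k : nat) (u : trm) (e : trm) : trm :=
  match e with
  | EBVar n => if Nat.eqb k n then u else EBVar n
  | EFVar x => EFVar x
  | EUnit => EUnit
  | ELam e1 => ELam (open_trm_rec (S k) u e1)
  | EApp e1 e2 => EApp (open_trm_rec k u e1) (open_trm_rec k u e2)
  | EAnno e1 A => EAnno (open_trm_rec k u e1) A
  end.

Definition open_trm (e u : trm) : trm := open_trm_rec 0 u e.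

(* [u/x]e : substitution for a free variable; capture-avoiding by
   construction in the locally nameless representation. *)
Fixpoint subst (x : var) (u : trm) (e : trm) : trm :=
  match e with
  | EBVar n => EBVar n
  | EFVar y => if Nat.eqb x y then u else EFVar y
  | EUnit => EUnit
  | ELam e1 => ELam (subst x u e1)
  | EApp e1 e2 => EApp (subst x u e1) (subst x u e2)
  | EAnno e1 A => EAnno (subst x u e1) A
  end.

(* Declarative contexts; the head of the list is the most recent entry,
   so  Psi, alpha  is  CTVar alpha :: Psi  and  Psi, x:A  is  CVar x A :: Psi. *)
Inductive entry : Type :=
  | CTVar : var -> entry
  | CVar  : var -> typ -> entry.

Definition ctx := list entry.

Fixpoint tdom (G : ctx) : list var :=
  match G with
  | [] => []
  | CTVar a :: G' => a :: tdom G'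
  | CVar _ _ :: G' => tdom G'
  end.

Fixpoint vdom (G : ctx) : list var :=
  match G with
  | [] => []
  | CTVar _ :: G' => vdom G'
  | CVar x _ :: G' => x :: vdom G'
  end.

(* Psi |- A : all free type variables of A are declared in Psi
   (and A is locally closed). *)
Inductive wf_typ : ctx -> typ -> Prop :=
  | wf_unit : forall G, wf_typ G TUnit
  | wf_var : forall G a, In a (tdom G) -> wf_typ G (TFVar a)
  | wf_arr : forall G A B, wf_typ G A -> wf_typ G B -> wf_typ G (TArr A B)
  | wf_all : forall G A (L : list var),
      (forall a, ~ In a L -> wf_typ (CTVar a :: G) (open_typ A (TFVar a))) ->
      wf_typ G (TAll A).

Inductive wf_ctx : ctx -> Prop :=
  | wf_nil : wf_ctx []
  | wf_cons_tvar : forall G a, wf_ctx G -> ~ In a (tdom G) ->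
      wf_ctx (CTVar a :: G)
  | wf_cons_var : forall G x A, wf_ctx G -> ~ In x (vdom G) -> wf_typ G A ->
      wf_ctx (CVar x A :: G).

Inductive sub : ctx -> typ -> typ -> Prop :=
  | sub_var : forall G a, In a (tdom G) -> sub G (TFVar a) (TFVar a)
  | sub_unit : forall G, sub G TUnit TUnit
  | sub_arr : forall G A1 A2 B1 B2,
      sub G B1 A1 -> sub G A2 B2 -> sub G (TArr A1 A2) (TArr B1 B2)
  | sub_allL : forall G A B t,
      mono t -> wf_typ G t -> sub G (open_typ A t) B -> sub G (TAll A) B
  | sub_allR : forall G A B (L : list var),
      (forall b, ~ In b L -> sub (CTVar b :: G) A (open_typ B (TFVar b))) ->
      sub G A (TAll B).

(* Declarative bidirectional typing:
   check G e A   : Psi |- e <= A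
   infer G e A   : Psi |- e => A
   appj G e A C   : Psi |- e . A =>> C *)
Inductive check : ctx -> trm -> typ -> Prop :=
  | check_sub : forall G e A B, infer G e A -> sub G A B -> check G e B
  | check_unit : forall G, check G EUnit TUnit
  | check_all : forall G e A (L : list var),
      (forall a, ~ In a L -> check (CTVar a :: G) e (open_typ A (TFVar a))) ->
      check G e (TAll A)
  | check_lam : forall G e A B (L : list var),
      (forall x, ~ In x L -> check (CVar x A :: G) (open_trm e (EFVar x)) B) ->
      check G (ELam e) (TArr A B)
with infer : ctx -> trm -> typ -> Prop :=
  | infer_var : forall G x A, In (CVar x A) G -> infer G (EFVar x) A
  | infer_anno : forall G e A, wf_typ G A -> check G e A -> infer G (EAnno e A) A
  | infer_unit : forall G, infer G EUnit TUnit
  | infer_lam : forall G e s t (L : list var),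
      mono (TArr s t) -> wf_typ G (TArr s t) ->
      (forall x, ~ In x L -> check (CVar x s :: G) (open_trm e (EFVar x)) t) ->
      infer G (ELam e) (TArr s t)
  | infer_app : forall G e1 e2 A C,
      infer G e1 A -> appj G e2 A C -> infer G (EApp e1 e2) C
with appj : ctx -> trm -> typ -> typ -> Prop :=
  | app_all : forall G e A C t,
      mono t -> wf_typ G t -> appj G e (open_typ A t) C -> appj G e (TAll A) C
  | app_arr : forall G e A C, check G e A -> appj G e (TArr A C) C.

(* The annotation (e : A) is the only thing that can be substituted for x,
   and it is typed in Psi by rule Anno, which synthesizes exactly A.  So
   every use of the annotation in a derivation for [(e:A)/x]e' can be
   replaced by the variable rule for x:A, and the rest of the derivation is
   kept after weakening by x:A.  Under binders the substitution commutes
   with opening, because (e : A) is locally closed, being typable. *)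
From Stdlib Require Import List Arith Lia.

Scheme check_mut := Induction for check Sort Prop
with infer_mut := Induction for infer Sort Prop
with appj_mut := Induction for appj Sort Prop.
Combined Scheme typing_mut from check_mut, infer_mut, appj_mut.

Lemma fresh_var (L : list var) : exists a, ~ In a L.
Proof.
  exists (S (list_max L)); intros Hin.
  assert (Hle : Forall (fun k => k <= list_max L) L) by (apply list_max_le; lia).
  rewrite Forall_forall in Hle; specialize (Hle _ Hin); lia.
Qed.

Lemma incl_cons_cons (en : entry) (G G' : ctx) :
  incl G G' -> incl (en :: G) (en :: G').
Proof. intros H z [Hz | Hz]; [left | right; apply H]; auto. Qed.

Lemma incl_swap (en en' : entry) (G : ctx) : incl (en :: en' :: G) (en' :: en :: G).
Proof. intros z Hz; simpl in *; tauto. Qed.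

Lemma in_tdom G a : In a (tdom G) <-> In (CTVar a) G.
Proof.
  induction G as [| [b | y B] G IH]; simpl; [tauto | |].
  - rewrite IH; split; intros [H | H]; auto; left; congruence.
  - rewrite IH; split; [auto | intros [H | H]; [discriminate | auto]].
Qed.

Lemma tdom_incl G G' a : incl G G' -> In a (tdom G) -> In a (tdom G').
Proof. rewrite !in_tdom; auto. Qed.

Lemma wf_typ_weaken G T : wf_typ G T -> forall G', incl G G' -> wf_typ G' T.
Proof.
  induction 1 as [| G a Ha | | G A L _ IH]; intros G' Hincl.
  - constructor.
  - constructor; eauto using tdom_incl.
  - constructor; auto.
  - apply wf_all with L; intros a Ha; apply IH; auto using incl_cons_cons.
Qed.

Lemma sub_weaken G T U : sub G T U -> forall G', incl G G' -> sub G' T U.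
Proof.
  induction 1 as [G a Ha | | | G A B t Ht Hwf _ IH | G A B L _ IH]; intros G' Hincl.
  - constructor; eauto using tdom_incl.
  - constructor.
  - constructor; auto.
  - apply sub_allL with t; eauto using wf_typ_weaken.
  - apply sub_allR with L; intros b Hb; apply IH; auto using incl_cons_cons.
Qed.

Lemma typing_weaken :
  (forall G t C, check G t C -> forall G', incl G G' -> check G' t C) /\
  (forall G t C, infer G t C -> forall G', incl G G' -> infer G' t C) /\
  (forall G t B C, appj G t B C -> forall G', incl G G' -> appj G' t B C).
Proof.
  apply typing_mut; intros.
  - apply check_sub with A; eauto using sub_weaken.
  - apply check_unit.
  - apply check_all with L; eauto using incl_cons_cons.
  - apply check_lam with L; eauto using incl_cons_cons.
  - apply infer_var; auto.
  - apply infer_anno; eauto using wf_typ_weaken.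
  - apply infer_unit.
  - apply infer_lam with L; eauto using wf_typ_weaken, incl_cons_cons.
  - apply infer_app with A; auto.
  - apply app_all with t; eauto using wf_typ_weaken.
  - apply app_arr; auto.
Qed.

Fixpoint lc_at (k : nat) (e : trm) : Prop :=
  match e with
  | EBVar n => n < k
  | EFVar _ | EUnit => True
  | ELam e1 => lc_at (S k) e1
  | EApp e1 e2 => lc_at k e1 /\ lc_at k e2
  | EAnno e1 _ => lc_at k e1
  end.

Lemma lc_at_open_trm_rec e k u : lc_at k (open_trm_rec k u e) -> lc_at (S k) e.
Proof.
  revert k; induction e; simpl; intros k H; try tauto; eauto.
  - destruct (Nat.eqb_spec k n); simpl in H; lia.
  - destruct H; eauto.
Qed.

Lemma open_trm_rec_lc e k j u : lc_at k e -> k <= j -> open_trm_rec j u e = e.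
Proof.
  revert k j; induction e; simpl; intros k j H Hkj; auto.
  - destruct (Nat.eqb_spec j n); [lia | auto].
  - f_equal; apply (IHe (S k)); [auto | lia].
  - destruct H; f_equal; eauto.
  - f_equal; eauto.
Qed.

Lemma typing_lc :
  (forall G t C, check G t C -> lc_at 0 t) /\
  (forall G t C, infer G t C -> lc_at 0 t) /\
  (forall G t B C, appj G t B C -> lc_at 0 t).
Proof.
  apply typing_mut; intros; simpl; auto;
    destruct (fresh_var L) as [a Ha]; eauto using lc_at_open_trm_rec.
Qed.

Lemma subst_open_trm_rec_var e k x y u :
  x <> y -> (forall j, open_trm_rec j (EFVar y) u = u) ->
  open_trm_rec k (EFVar y) (subst x u e) = subst x u (open_trm_rec k (EFVar y) e).
Proof.
  intros Hxy Hu; revert k; induction e; simpl; intros k; f_equal; auto.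
  - destruct (Nat.eqb k n); simpl; auto.
    destruct (Nat.eqb_spec x y); congruence.
  - destruct (Nat.eqb x v); auto.
Qed.

Section UnsubstAnno.

Variables (x : var) (e : trm) (A : typ).

Lemma subst_anno_eq_unit e' : subst x (EAnno e A) e' = EUnit -> e' = EUnit.
Proof.
  destruct e'; simpl; try discriminate; auto.
  destruct (Nat.eqb x v); discriminate.
Qed.

Lemma subst_anno_eq_fvar e' y :
  subst x (EAnno e A) e' = EFVar y -> e' = EFVar y.
Proof.
  destruct e'; simpl; try discriminate.
  destruct (Nat.eqb x v); congruence.
Qed.

Lemma subst_anno_eq_lam e' t :
  subst x (EAnno e A) e' = ELam t -> exists e1, e' = ELam e1 /\ subst x (EAnno e A) e1 = t.
Proof.
  destruct e'; simpl; try discriminate; [destruct (Nat.eqb x v); discriminate |].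
  intros [= <-]; eauto.
Qed.

Lemma subst_anno_eq_app e' t1 t2 :
  subst x (EAnno e A) e' = EApp t1 t2 ->
  exists e1 e2, e' = EApp e1 e2 /\
    subst x (EAnno e A) e1 = t1 /\ subst x (EAnno e A) e2 = t2.
Proof.
  destruct e'; simpl; try discriminate; [destruct (Nat.eqb x v); discriminate |].
  intros [= <- <-]; eauto.
Qed.

Lemma subst_anno_eq_anno e' t B :
  subst x (EAnno e A) e' = EAnno t B ->
  (e' = EFVar x /\ B = A) \/
  exists e1, e' = EAnno e1 B /\ subst x (EAnno e A) e1 = t.
Proof.
  destruct e'; simpl; try discriminate.
  - destruct (Nat.eqb_spec x v) as [<- | _]; [intros [= _ <-] | discriminate]; auto.
  - intros [= <- <-]; eauto.
Qed.

Hypothesis e_lc : lc_at 0 e.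

Lemma subst_anno_open_var e' y :
  x <> y ->
  subst x (EAnno e A) (open_trm e' (EFVar y)) = open_trm (subst x (EAnno e A) e') (EFVar y).
Proof.
  intros Hxy; symmetry; apply subst_open_trm_rec_var; [auto |].
  intros j; simpl; f_equal; apply open_trm_rec_lc with 0; [auto | lia].
Qed.

Lemma typing_unsubst_anno :
  (forall G t C, check G t C ->
     forall e', subst x (EAnno e A) e' = t -> check (CVar x A :: G) e' C) /\
  (forall G t C, infer G t C ->
     forall e', subst x (EAnno e A) e' = t -> infer (CVar x A :: G) e' C) /\
  (forall G t B C, appj G t B C ->
     forall e', subst x (EAnno e A) e' = t -> appj (CVar x A :: G) e' B C).
Proof.
  destruct typing_weaken as [check_weaken _].
  apply typing_mut.
  - intros G t B C _ IH Hsub e' Heq.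
    apply check_sub with B; [auto | apply sub_weaken with G; auto using incl_tl, incl_refl].
  - intros G e' Heq; rewrite (subst_anno_eq_unit e' Heq); constructor.
  - intros G t B L _ IH e' Heq; apply check_all with L; intros a Ha.
    apply check_weaken with (CVar x A :: CTVar a :: G); auto using incl_swap.
  - intros G t B C L _ IH e' Heq.
    destruct (subst_anno_eq_lam e' t Heq) as (e1 & -> & <-).
    apply check_lam with (x :: L); intros y Hy; simpl in Hy.
    apply check_weaken with (CVar x A :: CVar y B :: G); [| apply incl_swap].
    apply IH; [tauto | apply subst_anno_open_var; tauto].
  - intros G y B Hy e' Heq; rewrite (subst_anno_eq_fvar e' y Heq).
    constructor; simpl; auto.
  - intros G t B Hwf _ IH e' Heq.
    destruct (subst_anno_eq_anno e' t B Heq) as [[-> ->] | (e1 & -> & <-)].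
    + constructor; simpl; auto.
    + constructor; auto; apply wf_typ_weaken with G; auto using incl_tl, incl_refl.
  - intros G e' Heq; rewrite (subst_anno_eq_unit e' Heq); constructor.
  - intros G t s u L Hmono Hwf _ IH e' Heq.
    destruct (subst_anno_eq_lam e' t Heq) as (e1 & -> & <-).
    apply infer_lam with (x :: L); auto.
    + apply wf_typ_weaken with G; auto using incl_tl, incl_refl.
    + intros y Hy; simpl in Hy.
      apply check_weaken with (CVar x A :: CVar y s :: G); [| apply incl_swap].
      apply IH; [tauto | apply subst_anno_open_var; tauto].
  - intros G t1 t2 B C _ IH1 _ IH2 e' Heq.
    destruct (subst_anno_eq_app e' t1 t2 Heq) as (e1 & e2 & -> & <- & <-).
    apply infer_app with B; auto.
  - intros G t B C s Hmono Hwf _ IH e' Heq.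
    apply app_all with s; auto; apply wf_typ_weaken with G; auto using incl_tl, incl_refl.
  - intros G t B C _ IH e' Heq; constructor; auto.
Qed.

End UnsubstAnno.

Theorem mainTheorem4 :
  forall (G : ctx) (e : trm) (A : typ) (x : var),
    wf_ctx G -> ~ In x (vdom G) -> check G e A ->
    (forall (e' : trm) (C : typ),
        check G (subst x (EAnno e A) e') C -> check (CVar x A :: G) e' C) /\
    (forall (e' : trm) (C : typ),
        infer G (subst x (EAnno e A) e') C -> infer (CVar x A :: G) e' C) /\
    (forall (e' : trm) (B C : typ),
        appj G (subst x (EAnno e A) e') B C -> appj (CVar x A :: G) e' B C).
Proof.
  intros G e A x _ _ He.
  assert (e_lc : lc_at 0 e) by exact (proj1 typing_lc _ _ _ He).
  destruct (typing_unsubst_anno x e A e_lc) as (Hcheck & Hinfer & Happ).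
  split; [| split]; intros; eauto.
Qed.
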